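(* Let $B(z)=\sum_{n\ge0}b_nz^n$, where $b_n$ is the number of Motzkin paths of length $n$ that have no horizontal step on level equal to their height. Then $$B(z)=(1+v+v^2)(1-v^{-2})\sum_{h\ge1}(-1)^{h-1}\frac{v^{h}}{1-v^{h}}+\frac{(1+v)(1+v+v^2)}{v}.$$
   Context: A Motzkin path of length $n$ is a sequence of $n$ steps, each an up-step $(1,1)$, a down-step $(1,-1)$ or a horizontal step $(1,0)$, starting at $(0,0)$, ending at $(n,0)$, and never going below the $x$-axis. Its height $h$ is the maximal $y$-coordinate reached. A horizontal step on level $j$ is a horizontal step from $(x,j)$ to $(x+1,j)$. Here $v=v(z)=\frac{1-z-\sqrt{1-2z-3z^2}}{2z}$ is the formal power series with $v(0)=0$ satisfying $z=\frac{v}{1+v+v^2}$. *)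

From Stdlib Require Import Reals ZArith List.
From Coquelicot Require Import Coquelicot.
Import ListNotations.

Inductive step := U | D | H.

Definition delta (s : step) : Z :=
  match s with U => 1%Z | D => (-1)%Z | H => 0%Z end.

Fixpoint all_words (n : nat) : list (list step) :=
  match n with
  | O => [nil]
  | S n => flat_map (fun w => [U :: w; D :: w; H :: w]) (all_words n)
  end.

Fixpoint levels (y : Z) (w : list step) : list Z :=
  match w with
  | nil => [y]
  | s :: w' => y :: levels (y + delta s)%Z w'
  end.

Definition is_motzkin (w : list step) : bool :=
  forallb (fun y => Z.leb 0 y) (levels 0 w) && Z.eqb (last (levels 0 w) 0%Z) 0.

Definition height (w : list step) : Z := fold_right Z.max 0%Z (levels 0 w).

Fixpoint has_H_at (y j : Z) (w : list step) : bool :=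
  match w with
  | nil => false
  | s :: w' =>
      (match s with H => Z.eqb y j | _ => false end)
      || has_H_at (y + delta s)%Z j w'
  end.

Definition good (w : list step) : bool :=
  is_motzkin w && negb (has_H_at 0 (height w) w).

Definition b (n : nat) : nat := length (filter good (all_words n)).

Definition v (z : R) : R := (1 - z - sqrt (1 - 2 * z - 3 * z ^ 2)) / (2 * z).

(* Say that a step word is confined to the strip [0, top] avoiding level t, from
   level j, when the path it describes from level j stays in [0, top], ends at
   level 0 and takes no horizontal step on level t.  A Motzkin path of height h
   with no horizontal step on level h is exactly a word confined to [0, h]
   avoiding h (from 0) that is not confined to [0, h - 1]; so the generating
   function C_h of these paths is a difference of two strip generating functions.

   Splitting a word at its first step shows that the strip generating functions,
   as functions of the starting level, solve a finite linear system.  For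
   0 < z < 1/3 this system has at most one solution (a maximum principle, as
   3z < 1), and with v = v(z) the combination K (v^j - v^(e - j)) solves it, since
   v and 1/v are the roots of z (x + 1 + 1/x) = 1.  Hence
     C_h = (1+v+v^2) [(1-v^(2h+1))/(1-v^(2h+3)) - (1-v^(2h))/(1-v^(2h+2))],
   which is (1+v+v^2)(1-v^-2) times the sum of the terms of index 2h+1 and 2h+2
   of the alternating series of the theorem.  Summing over h is a rearrangement
   of a nonnegative double series with finite columns (a path of length n has
   height at most n), which yields the theorem. *)

From Pilot Require Import Defs.
From Stdlib Require Import Reals ZArith List Lia Lra Psatz Bool.
From Coquelicot Require Import Coquelicot.

Section StripPaths.
Local Open Scope Z_scope.

Fixpoint confined (top t j : Z) (w : list step) : bool :=
  (0 <=? j) && (j <=? top) &&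
  match w with
  | nil => j =? 0
  | s :: w' =>
      match s with H => negb (j =? t) | _ => true end && confined top t (j + delta s) w'
  end.

Lemma levels_head (j : Z) (w : list step) : exists l, levels j w = j :: l.
Proof. destruct w; simpl; eauto. Qed.

Lemma confined_spec (top t j : Z) (w : list step) :
  confined top t j w = true <->
  (forall y, In y (levels j w) -> 0 <= y <= top) /\
  last (levels j w) 0 = 0 /\ has_H_at j t w = false.
Proof.
  revert j; induction w as [|s w IH]; intro j; simpl confined.
  - rewrite !andb_true_iff, !Z.leb_le, Z.eqb_eq; simpl.
    split.
    + intros [[H0 H1] ->]. split; [intros y [<-|[]]; lia | auto].
    + intros [Hin [-> _]]. destruct (Hin 0 (or_introl eq_refl)). auto.
  - rewrite !andb_true_iff, !Z.leb_le, IH.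
    destruct (levels_head (j + delta s) w) as [l Hl].
    change (levels j (s :: w)) with (j :: levels (j + delta s) w).
    change (has_H_at j t (s :: w)) with
      ((match s with H => j =? t | _ => false end) || has_H_at (j + delta s) t w).
    rewrite Hl, orb_false_iff.
    change (last (j :: (j + delta s) :: l) 0) with (last ((j + delta s) :: l) 0).
    destruct s; [| |rewrite negb_true_iff]; simpl In; firstorder (subst; auto).
Qed.

Lemma confined_raise (top top' t j : Z) (w : list step) : top <= top' ->
  confined top t j w = true -> confined top' t j w = true.
Proof.
  rewrite !confined_spec. intros Htop [Hin Hrest]. split; auto.
  intros y Hy. specialize (Hin y Hy). lia.
Qed.

Lemma fold_max_spec (l : list Z) :
  (forall y, In y l -> y <= fold_right Z.max 0 l) /\
  (fold_right Z.max 0 l = 0 \/ In (fold_right Z.max 0 l) l).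
Proof.
  induction l as [|a l [IHle IHin]]; simpl.
  - split; [intros _ []|auto].
  - split.
    + intros y [<-|Hy]; [lia|]. specialize (IHle y Hy). lia.
    + destruct (Z.max_spec a (fold_right Z.max 0 l)) as [[_ ->]|[_ ->]]; tauto.
Qed.

Lemma height_spec (w : list step) :
  In (height w) (levels 0 w) /\ forall y, In y (levels 0 w) -> y <= height w.
Proof.
  unfold height. destruct (fold_max_spec (levels 0 w)) as [Hle [H0|Hin]]; split; auto.
  rewrite H0. destruct (levels_head 0 w) as [l ->]. now left.
Qed.

Lemma levels_le_length (j : Z) (w : list step) :
  forall y, In y (levels j w) -> y <= j + Z.of_nat (length w).
Proof.
  revert j; induction w as [|s w IH]; intros j y Hy; simpl in Hy |- *.
  - destruct Hy as [<-|[]]; lia.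
  - destruct Hy as [<-|Hy]; [lia|]. specialize (IH _ y Hy). destruct s; simpl in IH; lia.
Qed.

Lemma height_bounds (w : list step) : 0 <= height w <= Z.of_nat (length w).
Proof.
  destruct (height_spec w) as [Hin Hle]. destruct (levels_head 0 w) as [l Hl].
  split.
  - apply Hle. rewrite Hl. now left.
  - apply (levels_le_length 0 w _ Hin).
Qed.

Lemma good_height_iff (h : Z) (w : list step) :
  good w && (height w =? h) = confined h h 0 w && negb (confined (h - 1) h 0 w).
Proof.
  apply eq_iff_eq_true.
  unfold good, is_motzkin.
  rewrite !andb_true_iff, !negb_true_iff, forallb_forall, !Z.eqb_eq.
  rewrite <- (not_true_iff_false (confined (h - 1) h 0 w)), !confined_spec.
  destruct (height_spec w) as [Hin Hle].
  split.
  - intros [[[Hpos Hlast] HnoH] <-]. split.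
    + split; [|auto]. intros y Hy. split; [apply Z.leb_le, Hpos | apply Hle]; exact Hy.
    + intros [Hlow _]. specialize (Hlow _ Hin). lia.
  - intros [[Hin' [Hlast HnoH]] Hnot].
    assert (Hheight : height w = h).
    { pose proof (Hin' _ Hin) as Hheight_le.
      destruct (Z.eq_dec (height w) h) as [|Hne]; auto. exfalso. apply Hnot.
      split; auto. intros y Hy. specialize (Hin' y Hy). specialize (Hle y Hy). lia. }
    rewrite Hheight. repeat split; auto.
    intros y Hy. apply Z.leb_le, Hin', Hy.
Qed.

End StripPaths.

Section Counting.
Local Open Scope nat_scope.

Definition count (P : list step -> bool) (n : nat) : nat :=
  length (filter P (all_words n)).

(* Counting words of length n + 1 according to their first step (the down step
   is written [Defs.D], as Coquelicot also exports a [D]). *)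
Lemma count_succ (P : list step -> bool) (n : nat) :
  count P (S n) =
  count (fun w => P (U :: w)) n + count (fun w => P (Defs.D :: w)) n +
  count (fun w => P (H :: w)) n.
Proof.
  unfold count. simpl. induction (all_words n) as [|w l IH]; simpl; auto.
  destruct (P (U :: w)), (P (Defs.D :: w)), (P (H :: w)); simpl; rewrite IH; lia.
Qed.

Lemma all_words_length (n : nat) (w : list step) : In w (all_words n) -> length w = n.
Proof.
  revert w; induction n as [|n IH]; simpl; intros w Hw.
  - destruct Hw as [<-|[]]; auto.
  - apply in_flat_map in Hw. destruct Hw as [x [Hx Hw]].
    destruct Hw as [<-|[<-|[<-|[]]]]; simpl; f_equal; auto.
Qed.

Lemma count_ext (P Q : list step -> bool) (n : nat) :
  (forall w, length w = n -> P w = Q w) -> count P n = count Q n.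
Proof.
  intro E. unfold count. f_equal. apply filter_ext_in.
  intros w Hw. apply E, (all_words_length n w Hw).
Qed.

Lemma count_false (P : list step -> bool) (n : nat) :
  (forall w, P w = false) -> count P n = 0.
Proof. intro E. unfold count. induction (all_words n); simpl; auto. now rewrite E. Qed.

Lemma count_split (P Q : list step -> bool) (n : nat) :
  count P n = count (fun w => P w && Q w) n + count (fun w => P w && negb (Q w)) n.
Proof.
  unfold count. induction (all_words n) as [|w l IH]; simpl; auto.
  destruct (P w), (Q w); simpl; lia.
Qed.

Lemma count_le_pow3 (P : list step -> bool) (n : nat) : count P n <= 3 ^ n.
Proof.
  assert (Hlen : length (all_words n) = 3 ^ n).
  { induction n as [|n IH]; simpl; auto.
    rewrite <- IH. clear IH. induction (all_words n) as [|w l IHl]; simpl; lia. }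
  unfold count. rewrite <- Hlen. apply filter_length_le.
Qed.

Lemma strip_test_true (top j : Z) :
  (0 <= j <= top)%Z -> ((0 <=? j) && (j <=? top))%Z = true.
Proof. intro Hj. apply andb_true_iff. split; apply Z.leb_le; lia. Qed.

Lemma count_confined_nil (top t j : Z) : (0 <= j <= top)%Z ->
  count (confined top t j) 0 = if (j =? 0)%Z then 1 else 0.
Proof.
  intro Hj. unfold count. simpl. rewrite (strip_test_true top j Hj).
  now destruct (j =? 0)%Z.
Qed.

Lemma count_confined_outside (top t j : Z) (n : nat) :
  ~ (0 <= j <= top)%Z -> count (confined top t j) n = 0.
Proof.
  intro Hj. apply count_false. intro w.
  destruct w; simpl; destruct (Z.leb_spec 0 j), (Z.leb_spec j top); simpl; auto; lia.
Qed.

Lemma count_confined_succ (top t j : Z) (n : nat) : (0 <= j <= top)%Z ->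
  count (confined top t j) (S n) =
  count (confined top t (j + 1)) n + count (confined top t (j - 1)) n +
  (if (j =? t)%Z then 0 else count (confined top t j) n).
Proof.
  intro Hj. rewrite count_succ. simpl confined. rewrite (strip_test_true top j Hj).
  f_equal. destruct (j =? t)%Z.
  - now apply count_false.
  - apply count_ext. intros w _. simpl. now rewrite Z.add_0_r.
Qed.

Definition height_count (h n : nat) : nat :=
  count (fun w => good w && (height w =? Z.of_nat h)%Z) n.

Lemma count_confined_split (h n : nat) :
  count (confined (Z.of_nat h) (Z.of_nat h) 0) n =
  count (confined (Z.of_nat h - 1) (Z.of_nat h) 0) n + height_count h n.
Proof.
  set (lower := confined (Z.of_nat h - 1) (Z.of_nat h) 0%Z).
  rewrite (count_split _ lower). f_equal.
  - apply count_ext. intros w _. destruct (lower w) eqn:Hlow.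
    + now rewrite (confined_raise (Z.of_nat h - 1) (Z.of_nat h) _ _ _ ltac:(lia) Hlow).
    + now rewrite andb_false_r.
  - apply count_ext. intros w _. unfold height_count. now rewrite good_height_iff.
Qed.

End Counting.

Open Scope R_scope.

Lemma count_by_value (P : list step -> bool) (f : list step -> Z) (n N : nat) :
  INR (count (fun w => P w && (0 <=? f w)%Z && (f w <=? Z.of_nat N)%Z) n) =
  sum_f_R0 (fun h => INR (count (fun w => P w && (f w =? Z.of_nat h)%Z) n)) N.
Proof.
  induction N as [|N IH].
  - cbn [sum_f_R0]. f_equal. apply count_ext. intros w _. destruct (P w); simpl; auto.
    destruct (Z.eqb_spec (f w) 0), (Z.leb_spec 0 (f w)), (Z.leb_spec (f w) 0); auto; lia.
  - rewrite tech5, <- IH, <- plus_INR. f_equal.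
    rewrite (count_split _ (fun w => f w <=? Z.of_nat N)%Z).
    f_equal; apply count_ext; intros w _;
      destruct (P w), (Z.leb_spec 0 (f w)), (Z.leb_spec (f w) (Z.of_nat N)),
        (Z.leb_spec (f w) (Z.of_nat (S N))), (Z.eqb_spec (f w) (Z.of_nat (S N)));
      simpl; auto; lia.
Qed.

Lemma b_as_height_sum (n N : nat) : (n <= N)%nat ->
  INR (b n) = sum_f_R0 (fun h => INR (height_count h n)) N.
Proof.
  intro HnN. unfold height_count. rewrite <- count_by_value.
  change (b n) with (count good n). f_equal. apply count_ext. intros w Hw.
  destruct (height_bounds w). destruct (good w); simpl; auto.
  destruct (Z.leb_spec 0 (height w)), (Z.leb_spec (height w) (Z.of_nat N)); auto; lia.
Qed.

Lemma is_series_partial_sums (a : nat -> R) (l : R) :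
  is_series a l <-> is_lim_seq (fun N => sum_f_R0 a N) l.
Proof. rewrite is_series_Reals, is_lim_seq_Reals. reflexivity. Qed.

Lemma is_series_pairs (a : nat -> R) (l : R) :
  is_series a l ->
  is_series (fun h => a (2 * h + 1)%nat + a (2 * h + 2)%nat) (l - a 0%nat).
Proof.
  rewrite !is_series_partial_sums. intro Ha.
  assert (Hgroup : forall N, sum_f_R0 (fun h => a (2 * h + 1)%nat + a (2 * h + 2)%nat) N
                             = sum_f_R0 a (2 * N + 2) - a 0%nat).
  { induction N as [|N IH]; [simpl; ring|].
    replace (2 * S N + 2)%nat with (S (S (2 * N + 2))) by lia.
    rewrite !tech5, IH.
    replace (2 * S N + 1)%nat with (S (2 * N + 2)) by lia.
    replace (2 * S N + 2)%nat with (S (S (2 * N + 2))) by lia. ring. }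
  apply (is_lim_seq_ext (fun N => sum_f_R0 a (2 * N + 2) - a 0%nat)).
  { intro N. now rewrite Hgroup. }
  apply is_lim_seq_minus'; [|apply is_lim_seq_const].
  apply (is_lim_seq_subseq (fun n => sum_f_R0 a n) l (fun N => 2 * N + 2)%nat); auto.
  intros P [N HN]. exists N. intros n Hn. apply HN. lia.
Qed.

Lemma sum_f_R0_exchange (f : nat -> nat -> R) (M N : nat) :
  sum_f_R0 (fun n => sum_f_R0 (fun h => f h n) M) N =
  sum_f_R0 (fun h => sum_f_R0 (fun n => f h n) N) M.
Proof.
  induction N as [|N IH]; [reflexivity|].
  rewrite tech5, IH, <- plus_sum. apply sum_eq. intros i _. now rewrite tech5.
Qed.

Lemma partial_sum_mono (f : nat -> R) (m n : nat) :
  (forall k, 0 <= f k) -> (m <= n)%nat -> sum_f_R0 f m <= sum_f_R0 f n.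
Proof.
  intros Hf Hmn. induction Hmn as [|n _ IH]; [lra|].
  rewrite tech5. specialize (Hf (S n)). lra.
Qed.

Lemma is_lim_seq_sum_rows (a : nat -> nat -> R) (G : nat -> R) (M : nat) :
  (forall h, is_series (a h) (G h)) ->
  is_lim_seq (fun N => sum_f_R0 (fun h => sum_f_R0 (a h) N) M) (sum_f_R0 G M).
Proof.
  intro HG. induction M as [|M IH]; simpl.
  - apply is_series_partial_sums, HG.
  - apply is_lim_seq_plus'; [exact IH | apply is_series_partial_sums, HG].
Qed.

Lemma is_series_by_rows (a : nat -> nat -> R) (G B : nat -> R) (L : R) :
  (forall h n, 0 <= a h n) ->
  (forall h, is_series (a h) (G h)) -> is_series G L ->
  (forall n N, (n <= N)%nat -> B n = sum_f_R0 (fun h => a h n) N) ->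
  is_series B L.
Proof.
  intros Ha HG HL HB.
  assert (Hrow_le : forall h N, sum_f_R0 (a h) N <= G h).
  { intros h N. apply sum_incr; auto. apply is_lim_seq_Reals, is_series_partial_sums, HG. }
  assert (HB0 : forall n, 0 <= B n).
  { intro n. rewrite (HB n n) by lia. apply cond_pos_sum. auto. }
  assert (Hpartial_le : forall N, sum_f_R0 B N <= L).
  { intro N.
    rewrite (sum_eq _ (fun n => sum_f_R0 (fun h => a h n) N)) by (intros; apply HB; auto).
    rewrite sum_f_R0_exchange. apply Rle_trans with (sum_f_R0 G N).
    - apply sum_Rle. intros. apply Hrow_le.
    - apply sum_incr; [apply is_lim_seq_Reals, is_series_partial_sums, HL|].
      intro h. apply Rle_trans with (sum_f_R0 (a h) 0); [apply cond_pos_sum; auto|apply Hrow_le]. }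
  destruct (growing_cv (fun N => sum_f_R0 B N)) as [L' HL'].
  { intro N. rewrite tech5. specialize (HB0 (S N)). lra. }
  { exists L. intros x [N ->]. apply Hpartial_le. }
  apply is_lim_seq_Reals in HL'.
  assert (HL'_le : L' <= L).
  { exact (is_lim_seq_le _ _ _ _ Hpartial_le HL' (is_lim_seq_const L)). }
  assert (Hrows_le : forall M N, sum_f_R0 (fun h => sum_f_R0 (a h) N) M <= L').
  { intros M N. rewrite <- sum_f_R0_exchange.
    apply Rle_trans with (sum_f_R0 B N).
    - apply sum_Rle. intros n _. rewrite (HB n (Nat.max M n)) by lia.
      apply partial_sum_mono; [intro; apply Ha | lia].
    - apply sum_incr; [apply is_lim_seq_Reals, HL' | exact HB0]. }
  assert (HL_le : L <= L').
  { assert (HGpartial : forall M, sum_f_R0 G M <= L').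
    { intro M.
      exact (is_lim_seq_le _ _ _ _ (Hrows_le M) (is_lim_seq_sum_rows a G M HG)
               (is_lim_seq_const L')). }
    exact (is_lim_seq_le _ _ _ _ HGpartial (proj1 (is_series_partial_sums _ _) HL)
             (is_lim_seq_const L')). }
  apply is_series_partial_sums. replace L with L' by lra. exact HL'.
Qed.

Definition alt_term (w : R) (k : nat) : R := (-1) ^ k * w ^ (S k) / (1 - w ^ (S k)).

(* For 0 < w < 1 the series converges absolutely, by comparison with w^k / (1 - w). *)
Lemma ex_series_alt_term (w : R) : 0 < w < 1 -> ex_series (alt_term w).
Proof.
  intro Hw. apply (@ex_series_le R_AbsRing R_CompleteNormedModule _ (fun k => / (1 - w) * w ^ k)).
  - intro k. change norm with Rabs. simpl.
    assert (Hk0 : 0 < w ^ k) by (apply pow_lt; lra).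
    assert (Hk1 : w ^ k <= 1) by (rewrite <- (pow1 k); apply pow_incr; lra).
    assert (Hpow : 0 < w ^ S k <= w ^ k) by (simpl; split; nra).
    assert (Hden : 1 - w <= 1 - w ^ S k) by (simpl; nra).
    unfold alt_term, Rdiv. rewrite !Rabs_mult, pow_1_abs, Rabs_inv, !Rabs_right by lra.
    rewrite Rmult_1_l, Rmult_comm.
    apply Rmult_le_compat; try lra.
    + apply Rlt_le, Rinv_0_lt_compat. lra.
    + apply Rinv_le_contravar; lra.
  - apply (@ex_series_scal_l R_AbsRing R_CompleteNormedModule (/ (1 - w)) (fun k => w ^ k)).
    apply ex_series_geom. rewrite Rabs_right; lra.
Qed.

Lemma height_term_identity (w : R) (h : nat) : 0 < w < 1 ->
  (1 + w + w ^ 2) * (1 - w ^ (2 * h + 1)) / (1 - w ^ (2 * h + 3))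
  - (1 + w + w ^ 2) * (1 - w ^ (2 * h)) / (1 - w ^ (2 * h + 2))
  = (1 + w + w ^ 2) * (1 - / w ^ 2) * (alt_term w (2 * h + 1) + alt_term w (2 * h + 2)).
Proof.
  intros [Hw0 Hw1]. unfold alt_term.
  assert (Hodd : (-1) ^ (2 * h + 1) = -1) by (rewrite pow_add, pow_1_even; ring).
  assert (Heven : (-1) ^ (2 * h + 2) = 1) by (rewrite pow_add, pow_1_even; ring).
  replace (S (2 * h + 1)) with (2 * h + 2)%nat by lia.
  replace (S (2 * h + 2)) with (2 * h + 3)%nat by lia.
  rewrite Hodd, Heven, !pow_add.
  assert (Hq : 0 < w ^ (2 * h) <= 1).
  { split; [apply pow_lt; lra | rewrite <- (pow1 (2 * h)); apply pow_incr; lra]. }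
  assert (Hw2 : 0 < w ^ 2 < 1) by (split; [apply pow_lt; lra | apply pow_lt_1_compat; [lra|lia]]).
  assert (Hw3 : 0 < w ^ 3 < 1) by (split; [apply pow_lt; lra | apply pow_lt_1_compat; [lra|lia]]).
  generalize dependent (w ^ (2 * h)). intros q Hq.
  field. repeat split; apply Rgt_not_eq; nra.
Qed.

Lemma finite_argmax (f : nat -> R) (N : nat) :
  exists k, (k <= N)%nat /\ forall j, (j <= N)%nat -> f j <= f k.
Proof.
  induction N as [|N [k [Hk Hmax]]].
  - exists 0%nat. split; auto. intros j Hj. replace j with 0%nat by lia. lra.
  - destruct (Rle_dec (f (S N)) (f k)).
    + exists k. split; [lia|]. intros j Hj.
      destruct (Nat.eq_dec j (S N)) as [->|]; auto. apply Hmax. lia.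
    + exists (S N). split; [lia|]. intros j Hj.
      destruct (Nat.eq_dec j (S N)) as [->|]; [lra|]. specialize (Hmax j ltac:(lia)). lra.
Qed.

Section GeneratingFunctions.

Variable z : R.
Hypothesis hz : 0 < z < 1 / 3.

Lemma v_spec : 0 < v z < 1 /\ z * (1 + v z + v z ^ 2) = v z.
Proof.
  destruct hz as [hz0 hz1]. unfold v.
  set (disc := 1 - 2 * z - 3 * z ^ 2).
  assert (Hdisc : 0 < disc) by (unfold disc; nra).
  set (q := sqrt disc).
  assert (Hq0 : 0 <= q) by apply sqrt_pos.
  assert (Hq2 : q * q = disc) by (apply sqrt_sqrt; lra).
  assert (Hq_lt : q < 1 - z) by (unfold disc in Hq2; nra).
  assert (Hq_gt : 1 - 3 * z < q) by (unfold disc in Hq2; nra).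
  repeat split.
  - apply Rdiv_lt_0_compat; lra.
  - apply (Rmult_lt_reg_r (2 * z)); [lra|]. field_simplify; lra.
  - field_simplify_eq; [|lra]. unfold disc in Hq2. nra.
Qed.

(* Every counting series converges, being dominated by the series of (3z)^n. *)
Lemma ex_series_count (P : list step -> bool) :
  ex_series (fun n => INR (count P n) * z ^ n).
Proof.
  apply (@ex_series_le R_AbsRing R_CompleteNormedModule _ (fun n => (3 * z) ^ n)).
  - intro n. change norm with Rabs. simpl.
    rewrite Rpow_mult_distr, Rabs_right.
    + apply Rmult_le_compat_r; [apply pow_le; lra|].
      replace 3 with (INR 3) by (simpl; lra). rewrite <- pow_INR.
      apply le_INR, count_le_pow3.
    + apply Rle_ge, Rmult_le_pos; [apply pos_INR | apply pow_le; lra].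
  - apply ex_series_geom. rewrite Rabs_right; lra.
Qed.

Definition strip_gf (top t j : Z) : R :=
  Series (fun n => INR (count (confined top t j) n) * z ^ n).

Definition strip_system (top t : Z) (F : Z -> R) : Prop :=
  (forall j, ~ (0 <= j <= top)%Z -> F j = 0) /\
  (forall j, (0 <= j <= top)%Z ->
     F j = (if (j =? 0)%Z then 1 else 0) +
           z * (F (j + 1)%Z + F (j - 1)%Z + (if (j =? t)%Z then 0 else F j))).

Lemma strip_gf_system (top t : Z) : strip_system top t (strip_gf top t).
Proof.
  assert (Hex := ex_series_count).
  split.
  - intros j Hj. unfold strip_gf.
    rewrite (Series_ext _ (fun n => 0 * z ^ n)), Series_scal_l; [ring|].
    intro n. now rewrite count_confined_outside.
  - intros j Hj. unfold strip_gf at 1. rewrite Series_incr_1 by apply Hex.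
    rewrite count_confined_nil by exact Hj. f_equal; [destruct (j =? 0)%Z; simpl; ring|].
    unfold strip_gf. destruct (j =? t)%Z eqn:Ht; cbv iota.
    + rewrite Rplus_0_r, <- Series_plus, <- Series_scal_l by apply Hex.
      apply Series_ext. intro n.
      rewrite count_confined_succ, Ht by exact Hj. rewrite !plus_INR. simpl. ring.
    + rewrite <- Series_plus by apply Hex.
      rewrite <- Series_plus, <- Series_scal_l
        by first [apply Hex | apply (ex_series_plus _ _ (Hex _) (Hex _))].
      apply Series_ext. intro n.
      rewrite count_confined_succ, Ht by exact Hj. rewrite !plus_INR. simpl. ring.
Qed.

(* Maximum principle: the homogeneous system has only the zero solution, as a
   level where |E| is maximal gives max |E| <= 3 z max |E| with 3z < 1. *)
Lemma strip_homogeneous_zero (top t : Z) (E : Z -> R) :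
  (forall j, ~ (0 <= j <= top)%Z -> E j = 0) ->
  (forall j, (0 <= j <= top)%Z ->
     E j = z * (E (j + 1)%Z + E (j - 1)%Z + (if (j =? t)%Z then 0 else E j))) ->
  forall j, E j = 0.
Proof.
  intros Hout Hin.
  destruct (finite_argmax (fun k => Rabs (E (Z.of_nat k))) (Z.to_nat top)) as [k [_ Hmax]].
  set (jmax := Z.of_nat k) in *. set (m := Rabs (E jmax)) in *.
  assert (Hbound : forall i, Rabs (E i) <= m).
  { intro i. destruct (Z_le_dec 0 i); [destruct (Z_le_dec i top)|].
    - replace i with (Z.of_nat (Z.to_nat i)) by lia. apply Hmax. lia.
    - rewrite Hout, Rabs_R0 by lia. apply Rabs_pos.
    - rewrite Hout, Rabs_R0 by lia. apply Rabs_pos. }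
  assert (Hm : m <= 3 * z * m).
  { destruct (Z_le_dec jmax top) as [Hjmax|Hjmax].
    - assert (Hcentre : Rabs (if (jmax =? t)%Z then 0 else E jmax) <= m).
      { destruct (jmax =? t)%Z; [rewrite Rabs_R0; apply Rabs_pos | apply Rle_refl]. }
      assert (Hsum : Rabs (E (jmax + 1)%Z + E (jmax - 1)%Z +
                           (if (jmax =? t)%Z then 0 else E jmax)) <= 3 * m).
      { eapply Rle_trans; [apply Rabs_triang|].
        eapply Rle_trans; [apply Rplus_le_compat_r, Rabs_triang|].
        pose proof (Hbound (jmax + 1)%Z). pose proof (Hbound (jmax - 1)%Z). lra. }
      unfold m at 1. rewrite Hin by lia. rewrite Rabs_mult, (Rabs_right z) by lra. nra.
    - unfold m. rewrite Hout, Rabs_R0 by lia. lra. }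
  assert (Hm_pos : 0 <= m) by apply Rabs_pos.
  assert (Hm0 : m = 0) by (clearbody m; nra).
  intro j. apply Rabs_eq_0. pose proof (Hbound j). pose proof (Rabs_pos (E j)). lra.
Qed.

Lemma strip_system_unique (top t : Z) (F X : Z -> R) :
  strip_system top t F -> strip_system top t X -> forall j, F j = X j.
Proof.
  intros [HFout HFin] [HXout HXin] j.
  enough (Hdiff : forall i, F i - X i = 0) by (specialize (Hdiff j); lra).
  apply (strip_homogeneous_zero top t).
  - intros i Hi. rewrite HFout, HXout by exact Hi. ring.
  - intros i Hi. rewrite (HFin i Hi) at 1. rewrite (HXin i Hi) at 1.
    destruct (i =? t)%Z; ring.
Qed.

(* A solution Y on all of Z of the recurrence without boundary, with source
   z Y(-1) = 1 below level 0 and a boundary condition above level top matching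
   the forbidden level, restricts to a solution of the transfer system. *)
Lemma strip_system_of_bulk (top t : Z) (Y : Z -> R) : (0 <= top)%Z ->
  (forall j, Y j = z * (Y (j + 1)%Z + Y (j - 1)%Z + Y j)) ->
  z * Y (-1)%Z = 1 ->
  ((t = top + 1)%Z /\ Y (top + 1)%Z = 0 \/ t = top /\ Y (top + 1)%Z + Y top = 0) ->
  strip_system top t (fun j => if ((0 <=? j) && (j <=? top))%Z then Y j else 0).
Proof.
  intros Htop Hbulk Hbottom Hceiling. split.
  - intros j Hj. destruct (Z.leb_spec 0 j), (Z.leb_spec j top); simpl; auto; lia.
  - intros j Hj. rewrite strip_test_true by exact Hj.
    assert (Hup : (if ((0 <=? j + 1) && (j + 1 <=? top))%Z then Y (j + 1)%Z else 0)
                  = if (j =? top)%Z then 0 else Y (j + 1)%Z).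
    { destruct (Z.eqb_spec j top); [|rewrite strip_test_true by lia; reflexivity].
      destruct (Z.leb_spec (j + 1) top); [lia|]. now rewrite andb_false_r. }
    assert (Hdown : (if ((0 <=? j - 1) && (j - 1 <=? top))%Z then Y (j - 1)%Z else 0)
                    = if (j =? 0)%Z then 0 else Y (j - 1)%Z).
    { destruct (Z.eqb_spec j 0); [|rewrite strip_test_true by lia; reflexivity].
      now destruct (Z.leb_spec 0 (j - 1)); [lia|]. }
    rewrite Hup, Hdown. specialize (Hbulk j).
    set (up := if (j =? top)%Z then 0 else Y (j + 1)%Z).
    set (down := if (j =? 0)%Z then 0 else Y (j - 1)%Z).
    set (centre := if (j =? t)%Z then 0 else Y j).
    assert (Hsource : (if (j =? 0)%Z then 1 else 0) + z * down = z * Y (j - 1)%Z).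
    { unfold down. destruct (Z.eqb_spec j 0) as [->|]; [|ring].
      rewrite Rmult_0_r, Rplus_0_r. symmetry. exact Hbottom. }
    assert (Hceil : up + centre = Y (j + 1)%Z + Y j).
    { unfold up, centre. destruct Hceiling as [[-> Hc]|[-> Hc]].
      - destruct (Z.eqb_spec j top), (Z.eqb_spec j (top + 1)); try lia; subst; lra.
      - destruct (Z.eqb_spec j top); subst; lra. }
    transitivity ((if (j =? 0)%Z then 1 else 0) + z * down + z * (up + centre)); [|ring].
    rewrite Hsource, Hceil. lra.
Qed.

(* For every root w of z (1 + w + w^2) = w, the combinations K (w^i - w^(E - i))
   solve the recurrence without boundary (w and 1/w are both roots). *)
Lemma bulk_solution (w K : R) (E j : Z) : 0 < w -> z * (1 + w + w ^ 2) = w ->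
  let Y := fun i => K * (powerRZ w i - powerRZ w (E - i)) in
  Y j = z * (Y (j + 1)%Z + Y (j - 1)%Z + Y j).
Proof.
  intros Hw Hwz Y. unfold Y.
  replace (E - (j + 1))%Z with ((E - j) + -1)%Z by lia.
  replace (E - (j - 1))%Z with ((E - j) + 1)%Z by lia.
  replace (j - 1)%Z with (j + -1)%Z by lia.
  rewrite !powerRZ_add by lra.
  change (powerRZ w 1) with (w ^ 1). change (powerRZ w (-1)) with (/ w ^ 1).
  replace z with (w / (1 + w + w ^ 2)) by (field_simplify_eq; nra).
  field. split; nra.
Qed.

Lemma strip_gf_closed (top t : Z) (e : nat) : (0 <= top)%Z ->
  ((Z.of_nat e = 2 * top + 2 /\ t = top + 1) \/ (Z.of_nat e = 2 * top + 1 /\ t = top))%Z ->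
  strip_gf top t 0 = (1 + v z + v z ^ 2) * (1 - v z ^ e) / (1 - v z ^ (e + 2)).
Proof.
  intros Htop He.
  destruct v_spec as [[Hv0 Hv1] Hvz]. revert Hv0 Hv1 Hvz. generalize (v z) as w.
  intros w Hv0 Hv1 Hvz.
  assert (Hz : z = w / (1 + w + w ^ 2)) by (field_simplify_eq; nra).
  assert (Hpow : w ^ (e + 2) < 1) by (apply pow_lt_1_compat; [lra|lia]).
  pose (K := (1 + w + w ^ 2) / (1 - w ^ (e + 2))).
  pose (Y := fun i => K * (powerRZ w i - powerRZ w (Z.of_nat e - i))).
  assert (Hbottom : z * Y (-1)%Z = 1).
  { unfold Y, K. replace (Z.of_nat e - -1)%Z with (Z.of_nat (e + 1)) by lia.
    rewrite <- pow_powerRZ. change (powerRZ w (-1)) with (/ w ^ 1).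
    replace (e + 2)%nat with (S (e + 1)) in * by lia. simpl pow in *.
    rewrite Hz. field. repeat split; nra. }
  assert (Hceiling : ((t = top + 1)%Z /\ Y (top + 1)%Z = 0) \/
                     (t = top /\ Y (top + 1)%Z + Y top = 0)).
  { destruct He as [[He Ht]|[He Ht]]; [left|right]; split; auto; unfold Y.
    - replace (Z.of_nat e - (top + 1))%Z with (top + 1)%Z by lia. ring.
    - replace (Z.of_nat e - top)%Z with (top + 1)%Z by lia.
      replace (Z.of_nat e - (top + 1))%Z with top by lia. ring. }
  assert (Hbulk := bulk_solution w K (Z.of_nat e)).
  rewrite (strip_system_unique top t _ _ (strip_gf_system top t)
             (strip_system_of_bulk top t Y Htop (fun j => Hbulk j Hv0 Hvz) Hbottom Hceiling)).
  rewrite strip_test_true by lia.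
  unfold Y, K. rewrite Z.sub_0_r, <- pow_powerRZ. simpl. field. lra.
Qed.

Definition height_gf (h : nat) : R := Series (fun n => INR (height_count h n) * z ^ n).

Lemma height_gf_correct (h : nat) :
  is_series (fun n => INR (height_count h n) * z ^ n) (height_gf h).
Proof. apply Series_correct, ex_series_count. Qed.

(* C_h is the difference of two strip generating functions, whence its closed
   form in terms of the alternating series. *)
Lemma height_gf_closed (h : nat) :
  height_gf h = (1 + v z + v z ^ 2) * (1 - / v z ^ 2) *
                (alt_term (v z) (2 * h + 1) + alt_term (v z) (2 * h + 2)).
Proof.
  rewrite <- height_term_identity by apply v_spec.
  assert (Hdiff : height_gf h =
            strip_gf (Z.of_nat h) (Z.of_nat h) 0 - strip_gf (Z.of_nat h - 1) (Z.of_nat h) 0).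
  { unfold height_gf, strip_gf. rewrite <- Series_minus by apply ex_series_count.
    apply Series_ext. intro n. rewrite count_confined_split, plus_INR. ring. }
  rewrite Hdiff, (strip_gf_closed _ _ (2 * h + 1)) by lia.
  replace (2 * h + 1 + 2)%nat with (2 * h + 3)%nat by lia. f_equal.
  destruct h as [|h].
  - rewrite (proj1 (strip_gf_system _ _)) by lia. simpl. field.
    destruct v_spec as [[Hv0 Hv1] _]. nra.
  - rewrite (strip_gf_closed _ _ (2 * S h)) by lia. do 3 f_equal; lia.
Qed.

End GeneratingFunctions.

(* Main theorem: summing C_h over h, pairing the terms of the alternating series;
   the first term v / (1 - v) accounts for the correction (1 + v)(1 + v + v^2)/v. *)
Theorem mainTheorem5 (z : R) (hz0 : 0 < z) (hz1 : z < 1 / 3) :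
  exists T : R,
    is_series (fun k : nat => (-1) ^ k * (v z) ^ (S k) / (1 - (v z) ^ (S k))) T /\
    is_series (fun n : nat => INR (b n) * z ^ n)
      ((1 + v z + (v z) ^ 2) * (1 - / (v z) ^ 2) * T
       + (1 + v z) * (1 + v z + (v z) ^ 2) / v z).
Proof.
  assert (hz : 0 < z < 1 / 3) by lra.
  destruct (v_spec z hz) as [Hv _].
  set (T := Series (alt_term (v z))).
  assert (HT : is_series (alt_term (v z)) T) by apply Series_correct, ex_series_alt_term, Hv.
  exists T. split; [exact HT|].
  assert (Hheights : is_series (height_gf z)
            ((1 + v z + v z ^ 2) * (1 - / v z ^ 2) * (T - alt_term (v z) 0))).
  { apply (is_series_ext (fun h => (1 + v z + v z ^ 2) * (1 - / v z ^ 2) *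
                                   (alt_term (v z) (2 * h + 1) + alt_term (v z) (2 * h + 2)))).
    - intro h. symmetry. apply height_gf_closed, hz.
    - apply (@is_series_scal_l R_AbsRing R_NormedModule), is_series_pairs, HT. }
  replace ((1 + v z + v z ^ 2) * (1 - / v z ^ 2) * T + (1 + v z) * (1 + v z + v z ^ 2) / v z)
    with ((1 + v z + v z ^ 2) * (1 - / v z ^ 2) * (T - alt_term (v z) 0))
    by (unfold alt_term; simpl; field; lra).
  apply (is_series_by_rows (fun h n => INR (height_count h n) * z ^ n) (height_gf z)).
  - intros h n. apply Rmult_le_pos; [apply pos_INR | apply pow_le; lra].
  - intro h. apply height_gf_correct, hz.
  - exact Hheights.
  - intros n N HnN. rewrite (b_as_height_sum n N HnN), <- scal_sum. apply Rmult_comm.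
Qed.
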